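(* Let $|\varphi_0\rangle,|\varphi_1\rangle,|\varphi_2\rangle,|\varphi_3\rangle,|\varphi_4\rangle$ be vectors in a complex Hilbert space, each of norm at most $1$, and let $\epsilon\ge0$ with $\big|\||\varphi_0\rangle\|-1\big|\le\epsilon$, $\big|\||\varphi_4\rangle\|-1\big|\le\epsilon$ and $\||\varphi_0\rangle+|\varphi_4\rangle\|\le\epsilon$. Then $$\||\varphi_0\rangle+|\varphi_1\rangle\|^2+\||\varphi_1\rangle+|\varphi_2\rangle\|^2+\||\varphi_2\rangle+|\varphi_3\rangle\|^2+\||\varphi_3\rangle+|\varphi_4\rangle\|^2\le16\cos^2(\pi/8)+6\epsilon .$$
   Context: Norms are Euclidean norms on a complex inner product space. *)

From HB Require Import structures.
From mathcomp Require Import all_boot all_order all_algebra.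
From mathcomp Require Import all_classical all_reals all_analysis.
From mathcomp Require Import complex.
Set Implicit Arguments. Unset Strict Implicit. Unset Printing Implicit Defensive.
Import Order.TTheory GRing.Theory Num.Theory.
Local Open Scope ring_scope.

Record inner_product (R : realType) (V : lmodType R[i]) (ip : V -> V -> R[i]) : Prop := {
  ip_linear : forall (a : R[i]) (u v w : V), ip (a *: u + v) w = a * ip u w + ip v w;
  ip_conjsym : forall u v : V, ip v u = Num.conj (ip u v);
  ip_posdef : forall v : V, v != 0 -> 0 < ip v v
}.

Definition ipnorm (R : realType) (V : lmodType R[i]) (ip : V -> V -> R[i]) (v : V) : R :=
  Num.sqrt (complex.Re (ip v v)).

(* Expanding the four squared norms, the sum is at most 8 + 2 (<f0,f1> + <f1,f2> + <f2,f3> + <f3,f4>)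
   (real parts of inner products).  Since f4 is within eps of -f0, Cauchy-Schwarz gives
   <f3,f4> <= eps - <f3,f0>, and for unit-ball vectors the cyclic combination
   <f0,f1> + <f1,f2> + <f2,f3> - <f0,f3> is at most 2 sqrt 2, the Tsirelson bound;
   finally 8 + 4 sqrt 2 = 16 cos^2 (pi/8). *)

From HB Require Import structures.
From mathcomp Require Import all_boot all_order all_algebra.
From mathcomp Require Import all_classical all_reals all_analysis.
From mathcomp Require Import complex.
From mathcomp Require Import ring lra.
Import Order.TTheory GRing.Theory Num.Theory.
Set Implicit Arguments. Unset Strict Implicit.
Local Open Scope ring_scope.

Section RealInnerProduct.
Variables (R : realType) (V : lmodType R[i]) (ip : V -> V -> R[i]).
Hypothesis Hip : inner_product ip.

Definition reip (u v : V) : R := complex.Re (ip u v).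

Lemma ipD u v w : ip (u + v) w = ip u w + ip v w.
Proof. by have := ip_linear Hip 1 u v w; rewrite scale1r mul1r. Qed.

Lemma ip0 w : ip 0 w = 0.
Proof. by apply: (addrI (ip 0 w)); rewrite -ipD !addr0. Qed.

Lemma ipZ a u w : ip (a *: u) w = a * ip u w.
Proof. by have := ip_linear Hip a u 0 w; rewrite addr0 ip0 addr0. Qed.

Lemma reipC u v : reip u v = reip v u.
Proof. by rewrite /reip (ip_conjsym Hip u v); case: (ip u v). Qed.

Lemma reip0l w : reip 0 w = 0.
Proof. by rewrite /reip ip0. Qed.

Lemma reipDl u v w : reip (u + v) w = reip u w + reip v w.
Proof. by rewrite /reip ipD; case: (ip u w); case: (ip v w). Qed.

Lemma reipDr u v w : reip w (u + v) = reip w u + reip w v.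
Proof. by rewrite reipC reipDl !(reipC w). Qed.

Lemma reipZl (c : R) u w : reip (c%:C%C *: u) w = c * reip u w.
Proof. by rewrite /reip ipZ; case: (ip u w) => a b /=; rewrite mul0r subr0. Qed.

Lemma reipZr (c : R) u w : reip w (c%:C%C *: u) = c * reip w u.
Proof. by rewrite reipC reipZl reipC. Qed.

Lemma reipNl u w : reip (- u) w = - reip u w.
Proof. by apply/eqP; rewrite -addr_eq0 -reipDl addNr reip0l. Qed.

Lemma reipNr u w : reip w (- u) = - reip w u.
Proof. by rewrite reipC reipNl reipC. Qed.

Lemma reip_gt0 v : v != 0 -> 0 < reip v v.
Proof. by move=> /(ip_posdef Hip); rewrite ltcE => /andP[]. Qed.

Lemma reip_ge0 v : 0 <= reip v v.
Proof. by have [->|/reip_gt0/ltW//] := eqVneq v 0; rewrite reip0l. Qed.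

Lemma ipnorm_ge0 v : 0 <= ipnorm ip v.
Proof. exact: sqrtr_ge0. Qed.

Lemma ipnorm_sqr v : ipnorm ip v ^+ 2 = reip v v.
Proof. by rewrite /ipnorm sqr_sqrtr // reip_ge0. Qed.

Lemma ipnormD_sqr u v :
  ipnorm ip (u + v) ^+ 2 = ipnorm ip u ^+ 2 + ipnorm ip v ^+ 2 + 2 * reip u v.
Proof. by rewrite !ipnorm_sqr reipDl !reipDr (reipC v u); ring. Qed.

Lemma ipnorm_sqr_le1 v : ipnorm ip v <= 1 -> reip v v <= 1.
Proof. by move=> v1; rewrite -ipnorm_sqr; have := ipnorm_ge0 v; nra. Qed.

Lemma reip_le_ipnormM u v : reip u v <= ipnorm ip u * ipnorm ip v.
Proof.
have [->|u0] := eqVneq u 0; first by rewrite reip0l mulr_ge0 ?ipnorm_ge0.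
have [->|v0] := eqVneq v 0; first by rewrite reipC reip0l mulr_ge0 ?ipnorm_ge0.
set a := ipnorm ip u; set b := ipnorm ip v.
have a_gt0 : 0 < a by rewrite sqrtr_gt0 reip_gt0.
have b_gt0 : 0 < b by rewrite sqrtr_gt0 reip_gt0.
have := reip_ge0 (b%:C%C *: u - a%:C%C *: v).
rewrite !(reipDl, reipDr, reipNl, reipNr, reipZl, reipZr) (reipC v u).
rewrite -!ipnorm_sqr -/a -/b => h.
have ab_gt0 : 0 < a * b by rewrite mulr_gt0.
by rewrite -(ler_pM2l ab_gt0); nra.
Qed.

Lemma reip_cycle4_le f0 f1 f2 f3 :
  ipnorm ip f0 <= 1 -> ipnorm ip f1 <= 1 -> ipnorm ip f2 <= 1 -> ipnorm ip f3 <= 1 ->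
  reip f0 f1 + reip f1 f2 + reip f2 f3 - reip f0 f3 <= 2 * Num.sqrt 2.
Proof.
move=> /ipnorm_sqr_le1 n0 /ipnorm_sqr_le1 n1 /ipnorm_sqr_le1 n2 /ipnorm_sqr_le1 n3.
set s := Num.sqrt (2 : R).
have s_gt0 : 0 < s by rewrite sqrtr_gt0.
have ss : s * s = 2 by rewrite -expr2 sqr_sqrtr.
(* sum-of-squares certificate: the two squared norms add up to
   2 sum ||f_i||^2 - 2 s (<f0,f1> + <f1,f2> + <f2,f3> - <f0,f3>) *)
have := reip_ge0 (s%:C%C *: f0 - f1 + f3).
have := reip_ge0 (f1 - s%:C%C *: f2 + f3).
rewrite !(reipDl, reipDr, reipNl, reipNr, reipZl, reipZr).
rewrite (reipC f1 f0) (reipC f3 f0) (reipC f2 f1) (reipC f3 f1) (reipC f3 f2).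
rewrite !mulrA ss => sq1 sq2.
by rewrite -(ler_pM2l s_gt0); nra.
Qed.

End RealInnerProduct.

Lemma cos_piquarter (R : realType) : cos (pi / 4) = Num.sqrt 2 / 2 :> R.
Proof.
have c_gt0 : 0 < cos (pi / 4 : R).
  rewrite cos_gt0_pihalf// ltr_pM2l ?pi_gt0// ltf_pV2 ?qualifE//= ltr_nat andbT.
  by rewrite (@lt_trans _ _ 0)// ?oppr_lt0 ?divr_gt0 ?pi_gt0.
have sin_cos : sin (pi / 4 : R) = cos (pi / 4).
  have := tan_piquarter R; rewrite /tan => h.
  by rewrite -(divfK (lt0r_neq0 c_gt0) (sin _)) h mul1r.
apply/eqP; rewrite -(@eqrXn2 _ 2) ?ltW ?divr_ge0 ?sqrtr_ge0 //.
rewrite expr_div_n sqr_sqrtr //; apply/eqP.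
by have := cos2Dsin2 (pi / 4 : R); rewrite sin_cos; lra.
Qed.

Lemma cos_pi8_sqr (R : realType) : 16 * cos (pi / 8) ^+ 2 = 8 + 4 * Num.sqrt 2 :> R.
Proof.
have := cos_piquarter R.
have -> : (pi / 4 : R) = (pi / 8) *+ 2 by rewrite mulr2n; field.
by rewrite cos_mulr2n; lra.
Qed.

Theorem corollaryE5 (R : realType) (V : lmodType R[i]) (ip : V -> V -> R[i])
  (Hip : inner_product ip) (phi0 phi1 phi2 phi3 phi4 : V) (eps : R) :
  ipnorm ip phi0 <= 1 -> ipnorm ip phi1 <= 1 -> ipnorm ip phi2 <= 1 ->
  ipnorm ip phi3 <= 1 -> ipnorm ip phi4 <= 1 ->
  0 <= eps ->
  `|ipnorm ip phi0 - 1| <= eps ->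
  `|ipnorm ip phi4 - 1| <= eps ->
  ipnorm ip (phi0 + phi4) <= eps ->
  ipnorm ip (phi0 + phi1) ^+ 2 + ipnorm ip (phi1 + phi2) ^+ 2
    + ipnorm ip (phi2 + phi3) ^+ 2 + ipnorm ip (phi3 + phi4) ^+ 2
  <= 16 * cos (pi / 8) ^+ 2 + 6 * eps.
Proof.
move=> h0 h1 h2 h3 h4 eps_ge0 _ _ h04.
have cycle := reip_cycle4_le Hip h0 h1 h2 h3.
have near_antipodal : reip ip phi3 phi0 + reip ip phi3 phi4 <= eps.
  rewrite -(reipDr Hip); apply: le_trans (reip_le_ipnormM Hip _ _) _.
  by rewrite -[eps]mul1r ler_pM ?ipnorm_ge0.
have n0 := ipnorm_sqr_le1 Hip h0; have n1 := ipnorm_sqr_le1 Hip h1.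
have n2 := ipnorm_sqr_le1 Hip h2; have n3 := ipnorm_sqr_le1 Hip h3.
have n4 := ipnorm_sqr_le1 Hip h4.
rewrite cos_pi8_sqr !(ipnormD_sqr Hip) !(ipnorm_sqr Hip).
by rewrite (reipC Hip phi3 phi0) in near_antipodal; lra.
Qed.
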